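(* Let $\Delta,\Sigma$ be alphabets, $\varphi:\Delta\to2^{\Sigma^*}$ a regular language substitution, and $K_1,K_2\subseteq\Delta^+$ regular languages such that $\mathcal{R}_1=(K_1,\varphi)$ and $\mathcal{R}_2=(K_2,\varphi)$ are finite. Then $\mathcal{R}_1\cap\mathcal{R}_2$ is a finite rational set of regular languages that can be expressed with the language substitution $\varphi$, i.e. $\mathcal{R}_1\cap\mathcal{R}_2=(K_3,\varphi)$ for some regular $K_3\subseteq\Delta^+$.
   Context: A regular language substitution $\varphi:\Delta\to2^{\Sigma^*}$ maps each symbol to a regular language over $\Sigma$, extended by $\varphi(\delta w)=\varphi(\delta)\varphi(w)$. For $K\subseteq\Delta^+$, $(K,\varphi)=\{\varphi(w)\mid w\in K\}$; when $K$ is regular this set is a rational set of regular languages. Intersection is the ordinary set intersection of the two sets of languages. *)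

From Stdlib Require List.
From mathcomp Require Import all_boot.
Set Implicit Arguments. Unset Strict Implicit. Unset Printing Implicit Defensive.

Definition lang (S : finType) := seq S -> Prop.

Record dfa (S : finType) := DFA {
  dfa_state : finType;
  dfa_start : dfa_state;
  dfa_trans : dfa_state -> S -> dfa_state;
  dfa_final : pred dfa_state }.
Arguments dfa_state {S}.
Arguments dfa_start {S}.
Arguments dfa_trans {S}.
Arguments dfa_final {S}.

Definition dfa_accept (S : finType) (A : dfa S) (w : seq S) : bool :=
  dfa_final A (foldl (dfa_trans A) (dfa_start A) w).

Definition regular (S : finType) (L : lang S) : Prop :=
  exists A : dfa S, forall w, L w <-> dfa_accept A w.

Definition plus_lang (S : finType) (L : lang S) : Prop := ~ L [::].

Definition conc (S : finType) (L1 L2 : lang S) : lang S :=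
  fun w => exists u v, w = u ++ v /\ L1 u /\ L2 v.

Definition eps_lang (S : finType) : lang S := fun w => w = [::].

Fixpoint subst_word (D S : finType) (phi : D -> lang S) (w : seq D) : lang S :=
  match w with
  | [::] => @eps_lang S
  | d :: w' => conc (phi d) (subst_word phi w')
  end.

Definition regular_subst (D S : finType) (phi : D -> lang S) : Prop :=
  forall d, regular (phi d).

(* The set of languages (K, phi) = { phi(w) | w in K }. *)
Definition subst_image (D S : finType) (K : lang D) (phi : D -> lang S)
  : lang S -> Prop :=
  fun L => exists w, K w /\ L = subst_word phi w.

Definition finite_langset (S : finType) (R : lang S -> Prop) : Prop :=
  exists s : list (lang S), forall L, R L <-> List.In L s.

(* Both intersected sets are finite, so their intersection is finite; and each
   language of the intersection is phi(w) for some w in K1.  Choosing one such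
   witness per language gives a finite, hence regular, set K3 of nonempty words
   with (K3, phi) equal to the intersection. *)

From Stdlib Require Import Classical.
From Stdlib Require List.
From mathcomp Require Import all_boot.

Set Implicit Arguments. Unset Strict Implicit. Unset Printing Implicit Defensive.

Section FiniteLanguagesAreRegular.
Variable S : finType.

Lemma regular_ext (L1 L2 : lang S) :
  (forall w, L1 w <-> L2 w) -> regular L1 -> regular L2.
Proof. by move=> L12 [A HA]; exists A => w; rewrite -L12. Qed.

Lemma regular0 : regular (fun _ : seq S => False).
Proof. by exists (@DFA S unit tt (fun _ _ => tt) pred0). Qed.

Definition dfa_union (A B : dfa S) : dfa S :=
  @DFA S (dfa_state A * dfa_state B)%type (dfa_start A, dfa_start B)
    (fun p a => (dfa_trans A p.1 a, dfa_trans B p.2 a))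
    (fun p => dfa_final A p.1 || dfa_final B p.2).

Lemma foldl_dfa_union (A B : dfa S) (w : seq S) x y :
  foldl (dfa_trans (dfa_union A B)) (x, y) w =
  (foldl (dfa_trans A) x w, foldl (dfa_trans B) y w).
Proof. by elim: w x y => //= a w IHw x y; apply: IHw. Qed.

Lemma regularU (L1 L2 : lang S) :
  regular L1 -> regular L2 -> regular (fun w => L1 w \/ L2 w).
Proof.
move=> [A HA] [B HB]; exists (dfa_union A B) => w.
rewrite /dfa_accept /= foldl_dfa_union /= HA HB /dfa_accept.
by split=> [[]->|/orP[]]; rewrite ?orbT; auto.
Qed.

Section SingleWord.
Variable w : seq S.

(* State [i < size w] means "the prefix of length [i] of [w] has been read";
   state [size w] accepts and [size w + 1] is a sink. *)
Definition word_state := 'I_(size w).+2.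

Definition word_sink : word_state := ord_max.

Definition word_trans (i : word_state) (a : S) : word_state :=
  if (i < size w) && (nth a w i == a) then inord i.+1 else word_sink.

Definition word_dfa : dfa S :=
  @DFA S word_state (inord 0) word_trans (fun i => nat_of_ord i == size w).

Lemma foldl_word_sink v : foldl word_trans word_sink v = word_sink.
Proof. by elim: v => //= a v; rewrite /word_trans /= ltnNge leqnSn. Qed.

Lemma foldl_word_trans_final v i : i <= size w ->
  (nat_of_ord (foldl word_trans (inord i) v) == size w) = (v == drop i w).
Proof.
elim: v i => [|a v IHv] i le_i_w /=.
  rewrite inordK; last by rewrite ltnS ltnW.
  by rewrite [RHS]eq_sym -size_eq0 size_drop subn_eq0 eqn_leq le_i_w.
have sink_rejects u : (nat_of_ord (foldl word_trans word_sink u) == size w) = false.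
  by rewrite foldl_word_sink /= gtn_eqF.
rewrite {2}/word_trans inordK; last by rewrite ltnS ltnW.
case: ltnP => [lt_i_w | le_w_i] /=; last by rewrite sink_rejects drop_oversize.
rewrite (drop_nth a lt_i_w) eqseq_cons [a == _]eq_sym.
by case: (nth a w i =P a) => _ /=; [apply: IHv | rewrite sink_rejects].
Qed.

Lemma regular_word : regular (fun v => v = w).
Proof.
exists word_dfa => v; rewrite /dfa_accept /= foldl_word_trans_final // drop0.
by split=> [->|/eqP].
Qed.

End SingleWord.

Lemma regular_mem_seq (ws : seq (seq S)) : regular (fun v => v \in ws).
Proof.
elim: ws => [|w ws IHws].
  by apply: regular_ext regular0 => v; rewrite in_nil.
apply: regular_ext (regularU (regular_word w) IHws) => v.
by rewrite in_cons; split=> [[->|->]|/orP[/eqP|]]; rewrite ?eqxx ?orbT; auto.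
Qed.

End FiniteLanguagesAreRegular.

Lemma In_filter_classical (T : Type) (P : T -> Prop) (s : list T) :
  exists s', forall x, List.In x s' <-> List.In x s /\ P x.
Proof.
elim: s => [|a s [s' IHs]]; first by exists nil => x; split=> [|[]].
have [Pa | nPa] := classic (P a).
  by exists (a :: s')%list => x /=; rewrite IHs; split=> [[<-|[]]|[[<-|]]]; auto.
by exists s' => x /=; rewrite IHs; split=> [[]|[[<-|]]]; auto.
Qed.

Lemma finite_image_witnesses (A : eqType) (T : Type) (f : A -> T) (K : A -> Prop)
    (s : list T) :
  (forall x, List.In x s -> exists a, K a /\ x = f a) ->
  exists ws : seq A,
    (forall a, a \in ws -> K a /\ List.In (f a) s) /\
    (forall x, List.In x s -> exists2 a, a \in ws & x = f a).
Proof.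
elim: s => [|x s IHs] attained.
  by exists [::]; split=> [a|x []]; rewrite ?in_nil.
have [a [Ka ->]] := attained x (or_introl erefl).
have [|ws [ws_sub ws_cover]] := IHs; first by move=> y sy; apply: attained; right.
exists (a :: ws); split=> [b|y].
  by rewrite in_cons => /orP[/eqP->|/ws_sub[Kb fb]]; split; rewrite /=; auto.
case=> [<-|/ws_cover[b wsb ->]]; first by exists a; rewrite ?in_cons ?eqxx.
by exists b; rewrite // in_cons wsb orbT.
Qed.

Theorem proposition7 (D S : finType) (phi : D -> lang S) (K1 K2 : lang D) :
  regular_subst phi ->
  regular K1 -> plus_lang K1 ->
  regular K2 -> plus_lang K2 ->
  finite_langset (subst_image K1 phi) ->
  finite_langset (subst_image K2 phi) ->
  finite_langset (fun L => subst_image K1 phi L /\ subst_image K2 phi L) /\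
  exists K3 : lang D,
    regular K3 /\ plus_lang K3 /\
    (forall L, subst_image K3 phi L <->
               (subst_image K1 phi L /\ subst_image K2 phi L)).
Proof.
move=> _ _ K1_plus _ _ [s1 R1_s1] _.
have [s s_filter] := In_filter_classical (subst_image K2 phi) s1.
have R12_s L : subst_image K1 phi L /\ subst_image K2 phi L <-> List.In L s.
  by rewrite s_filter R1_s1.
split; first by exists s.
have [|ws [ws_sub ws_cover]] := @finite_image_witnesses _ _ (subst_word phi) K1 s.
  by move=> L /R12_s[[w [K1w ->]] _]; exists w.
exists (fun w => w \in ws); split; first exact: regular_mem_seq.
split; first by move=> /ws_sub[/K1_plus].
move=> L; rewrite R12_s; split=> [[w [/ws_sub[_ sw] ->]] // | /ws_cover[w wsw ->]].
by exists w.
Qed.
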